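(* Under the hypotheses below, let $\epsilon>0$ and $$\hat\Gamma_{N_2}^{\epsilon}(\mathcal{K})=\{z\in\mathrm{Grid}(N_2):\sigma_{\inf}((\mathcal{K}-zI)\mathcal{P}_{N_2}^* )+1/N_2\le\epsilon\}.$$ Then $\hat\Gamma_{N_2}^{\epsilon}(\mathcal{K})\subset\mathrm{Sp}_{\mathrm{ap},\epsilon}(\mathcal{K})$ for every $N_2$, and $\hat\Gamma_{N_2}^{\epsilon}(\mathcal{K})\to\mathrm{Sp}_{\mathrm{ap},\epsilon}(\mathcal{K})$ in the Attouch–Wets sense as $N_2\to\infty$.
   Context: $\mathcal{H}$ is an RKHS on $\mathcal{X}$ with kernel $\mathfrak{K}$ and kernel functions $\mathfrak{K}_x$. For $F:\mathcal{X}\to\mathcal{X}$, the Koopman operator $\mathcal{K}g=g\circ F$ (domain $\{g\in\mathcal{H}:g\circ F\in\mathcal{H}\}$, a closed operator) is assumed densely defined; $\mathcal{K}^*$ is its adjoint. $\mathfrak{K}_1,\mathfrak{K}_2,\dots$ is a countable family of kernel functions whose span is a core of both $\mathcal{K}$ and $\mathcal{K}^*$; $V_n=\mathrm{span}\{\mathfrak{K}_1,\dots,\mathfrak{K}_n\}$, $\mathcal{P}_n$ the orthogonal projection onto $V_n$, $\mathcal{P}_n^*$ the inclusion $V_n\hookrightarrow\mathcal{H}$. Injection modulus $\sigma_{\inf}(T)=\inf\{\|Tg\|/\|g\|:0\ne g\in\mathcal{D}(T)\}$; $\mathrm{Sp}_{\mathrm{ap},\epsilon}(T)=\overline{\{z\in\mathbb{C}:\sigma_{\inf}(T-zI)<\epsilon\}}$.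 $\mathrm{Grid}(N)=\frac1N(\mathbb{Z}+i\mathbb{Z})\cap\{z:|z|\le N\}$. Attouch–Wets convergence of closed sets $C_n\to C$: if $C=\emptyset$, for every $m$, $C_n\cap B_m(0)=\emptyset$ for all large $n$; otherwise, for every $\delta>0$ and compact $K\subset\mathbb{C}$, for all large $n$, $C_n\cap K\subset C+B_\delta(0)$ and $C\cap K\subset C_n+B_\delta(0)$. *)

(* Complex numbers are [R[i]]
   (mathcomp-real-closed's complex.v) over an arbitrary [R : realType];
   the topology on C is obtained through the regular copy [R[i]^o]. *)
From HB Require Import structures.
From mathcomp Require Import all_boot all_order all_algebra.
From mathcomp Require Import all_classical all_reals all_analysis.
From mathcomp Require Import complex.
Set Implicit Arguments. Unset Strict Implicit. Unset Printing Implicit Defensive.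
Import Order.TTheory GRing.Theory Num.Theory numFieldNormedType.Exports.
Local Open Scope ring_scope.
Local Open Scope classical_set_scope.

Section KoopmanDefs.
Variable R : realType.

Definition CC : Type := (R[i])^o.

Section Hilbert.
Variable H : lmodType R[i].
Variable ip : H -> H -> R[i].

Record is_inner_product : Prop := InnerProduct {
  ip_linl : forall (a : R[i]) (u v w : H), ip (a *: u + v) w = a * ip u w + ip v w;
  ip_herm : forall u v : H, ip u v = conjc (ip v u);
  ip_ge0  : forall u : H, 0 <= ip u u;
  ip_def  : forall u : H, ip u u = 0 -> u = 0 }.

Definition hnorm (u : H) : R := Num.sqrt (complex.Re (ip u u)).

Definition hcomplete : Prop :=
  forall u : nat -> H,
    (forall e : R, 0 < e -> exists N : nat, forall m n : nat,
        (N <= m)%N -> (N <= n)%N -> hnorm (u m - u n) < e) ->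
    exists l : H, forall e : R, 0 < e -> exists N : nat, forall n : nat,
        (N <= n)%N -> hnorm (u n - l) < e.

(* injection modulus of an operator T with domain D :
   inf { ||T g|| / ||g|| : 0 <> g in D }  (= +oo if D = {0}) *)
Definition sigma_inf (D : set H) (T : H -> H) : \bar R :=
  ereal_inf [set ((hnorm (T g)) / hnorm g)%:E | g in D `&` ~` [set 0]].

Definition span_fam (f : nat -> H) : set H :=
  [set v | exists (n : nat) (c : nat -> R[i]), v = \sum_(j < n) c j *: f j].

Definition Vn (f : nat -> H) (n : nat) : set H :=
  [set v | exists c : nat -> R[i], v = \sum_(j < n) c j *: f j].

Definition dense_in_H (D : set H) : Prop :=
  forall (g : H) (e : R), 0 < e -> exists f, D f /\ hnorm (g - f) < e.

(* S is a core of the closed operator (D, T): S is contained in D and is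
   dense in D for the graph norm (i.e. the closure of T restricted to S
   is T) *)
Definition is_core (S D : set H) (T : H -> H) : Prop :=
  S `<=` D /\
  forall f, D f -> forall e : R, 0 < e ->
    exists v, S v /\ hnorm (v - f) + hnorm (T v - T f) < e.

Definition adj_dom (D : set H) (T : H -> H) : set H :=
  [set g | exists h, forall f, D f -> ip (T f) g = ip f h].
Definition adj_op (D : set H) (T : H -> H) (g : H) : H :=
  xget 0 [set h | forall f, D f -> ip (T f) g = ip f h].
End Hilbert.

Section RKHS.
Variables (X : Type) (H : lmodType R[i]) (ip : H -> H -> R[i]).
(* ev g : X -> C is the function represented by g ; kf x = kernel function K_x *)
Variables (ev : H -> X -> R[i]) (kf : X -> H).

Record is_RKHS : Prop := RKHS {
  rkhs_ip : is_inner_product ip;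
  rkhs_complete : hcomplete ip;
  ev_lin : forall (a : R[i]) (u v : H) (x : X), ev (a *: u + v) x = a * ev u x + ev v x;
  ev_inj : forall u v : H, ev u = ev v -> u = v;
  ev_repr : forall (g : H) (x : X), ev g x = ip g (kf x) }.

Variable F : X -> X.

Definition koop_dom : set H := [set g | exists h, ev h = ev g \o F].
Definition koop (g : H) : H := xget 0 [set h | ev h = ev g \o F].

Definition koop_adj_dom : set H := adj_dom ip koop_dom koop.
Definition koop_adj : H -> H := adj_op ip koop_dom koop.

Definition koop_shift (z : R[i]) (g : H) : H := koop g - z *: g.

Definition Sp_ap (eps : R) : set CC :=
  closure [set z : CC | (sigma_inf ip koop_dom (koop_shift z) < eps%:E)%E].

End RKHS.

Definition Grid (N : nat) : set CC :=
  [set z : CC | exists a b : int,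
     z = ((a%:~R +i* b%:~R)%C : R[i]) / N%:R /\ `|z| <= N%:R].

Definition AW_conv (Cn : nat -> set CC) (C : set CC) : Prop :=
  (C = set0 ->
     forall m : nat, exists n0 : nat, forall n : nat, (n0 <= n)%N ->
       Cn n `&` ball (0 : CC) m%:R = set0) /\
  (C <> set0 ->
     forall (delta : R) (K : set CC), 0 < delta -> compact K ->
       exists n0 : nat, forall n : nat, (n0 <= n)%N ->
         Cn n `&` K `<=` [set w : CC | exists2 c, C c & `|w - c| < (delta%:C)%C] /\
         C `&` K `<=` [set w : CC | exists2 c, Cn n c & `|w - c| < (delta%:C)%C]).

Definition Gamma_hat (X : Type) (H : lmodType R[i]) (ip : H -> H -> R[i])
  (ev : H -> X -> R[i]) (kf : X -> H) (F : X -> X) (xs : nat -> X)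
  (eps : R) (N : nat) : set CC :=
  [set z : CC | Grid N z /\
     (sigma_inf ip (Vn (kf \o xs) N `&` koop_dom ev F) (koop_shift ev F z)
        + (N%:R^-1)%:E <= eps%:E)%E].

End KoopmanDefs.

(* A point w of hat-Gamma_N carries a nonzero v in V_N inside the domain of K with
   ||(K - w) v|| / ||v|| + 1/N <= eps, so sigma_inf(K - w) < eps and w lies in
   Sp_ap; this gives the inclusion.  Conversely, near a point c of Sp_ap there are z
   and g with ||(K - z) g|| < eps ||g||.  Since the span of the kernel functions is a
   core, g can be replaced by some v of that span, which lies in V_N for all large N,
   at a small cost in the quotient; a grid point w within 2/N of z then lies in
   hat-Gamma_N.  For a compact set Q, compactness of Q /\ Sp_ap makes this choice of
   N uniform, which is the Attouch-Wets convergence. *)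
From HB Require Import structures.
From mathcomp Require Import all_boot all_order all_algebra.
From mathcomp Require Import all_classical all_reals all_analysis.
From mathcomp Require Import complex.
From mathcomp Require Import ring lra.
Import Order.TTheory GRing.Theory Num.Theory numFieldNormedType.Exports.
Set Implicit Arguments. Unset Strict Implicit. Unset Printing Implicit Defensive.
Local Open Scope ring_scope.
Local Open Scope classical_set_scope.
Local Open Scope complex_scope.

Local Notation normc := ComplexField.Normc.normc.

Section InnerProduct.
Variables (R : realType) (H : lmodType R[i]) (ip : H -> H -> R[i]).
Hypothesis hip : is_inner_product ip.

Lemma ipDl u v w : ip (u + v) w = ip u w + ip v w.
Proof. by have := ip_linl hip 1 u v w; rewrite scale1r mul1r. Qed.

Lemma ip0l w : ip 0 w = 0.
Proof. by apply: (@addrI _ (ip 0 w)); rewrite -ipDl !addr0. Qed.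

Lemma ipZl a u w : ip (a *: u) w = a * ip u w.
Proof. by have := ip_linl hip a u 0 w; rewrite addr0 ip0l addr0. Qed.

Lemma ipDr u v w : ip w (u + v) = ip w u + ip w v.
Proof. by rewrite (ip_herm hip) ipDl rmorphD /= -!(ip_herm hip). Qed.

Lemma ipZr a u w : ip w (a *: u) = a^* * ip w u.
Proof. by rewrite (ip_herm hip) ipZl rmorphM /= -!(ip_herm hip). Qed.

Lemma ip0r w : ip w 0 = 0.
Proof. by rewrite (ip_herm hip) ip0l rmorph0. Qed.

Lemma ip_selfE u : ip u u = (complex.Re (ip u u))%:C.
Proof. by have := ip_ge0 hip u; case: (ip u u) => a b /andP[/eqP/= ->]. Qed.

Lemma Re_ip_self_ge0 u : 0 <= complex.Re (ip u u).
Proof. by have := ip_ge0 hip u; rewrite ip_selfE lecR. Qed.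

Lemma hnorm_ge0 u : 0 <= hnorm ip u. Proof. exact: sqrtr_ge0. Qed.

Lemma hnorm_sqr u : hnorm ip u ^+ 2 = complex.Re (ip u u).
Proof. by rewrite sqr_sqrtr // Re_ip_self_ge0. Qed.

Lemma hnorm_eq0 u : (hnorm ip u == 0) = (u == 0).
Proof.
apply/idP/eqP => [|->]; last by rewrite /hnorm ip0l sqrtr0.
rewrite sqrtr_eq0 => u0; apply: (ip_def hip); rewrite ip_selfE.
suff -> : complex.Re (ip u u) = 0 by [].
by apply/eqP; rewrite eq_le u0 Re_ip_self_ge0.
Qed.

Lemma hnorm_gt0 u : (0 < hnorm ip u) = (u != 0).
Proof. by rewrite lt_neqAle hnorm_ge0 andbT eq_sym hnorm_eq0. Qed.

Lemma hnormZ a u : hnorm ip (a *: u) = normc a * hnorm ip u.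
Proof.
case: a => a b; rewrite /hnorm ipZl ipZr ip_selfE /= -sqrtrM ?addr_ge0 ?sqr_ge0 //.
by congr Num.sqrt; ring.
Qed.

Lemma hdistC u v : hnorm ip (u - v) = hnorm ip (v - u).
Proof.
rewrite -opprB -[- (v - u)]scaleN1r hnormZ [normc _]/=.
by rewrite oppr0 expr0n addr0 sqrrN expr1n sqrtr1 mul1r.
Qed.

Lemma Re_ipD_sqr u v : complex.Re (ip (u + v) (u + v)) =
  complex.Re (ip u u) + complex.Re (ip v v) + 2 * complex.Re (ip u v).
Proof.
rewrite ipDl !ipDr !raddfD /= [ip v u](ip_herm hip).
by case: (ip u v) => a b /=; ring.
Qed.

(* Cauchy--Schwarz, from the nonnegativity of ||u + t v||^2 at t = - Re<u,v> / ||v||^2. *)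
Lemma Re_ip_le u v : complex.Re (ip u v) <= hnorm ip u * hnorm ip v.
Proof.
set B := complex.Re (ip u v).
have [B_le0|B_gt0] := lerP B 0.
  by apply: le_trans B_le0 _; rewrite mulr_ge0 ?hnorm_ge0.
have v0 : v != 0 by apply: contraTneq B_gt0 => v0; rewrite /B v0 ip0r ltxx.
have vv_gt0 : 0 < complex.Re (ip v v) by rewrite -hnorm_sqr exprn_gt0 ?hnorm_gt0.
set t := - B / complex.Re (ip v v).
have := Re_ip_self_ge0 (u + t%:C *: v).
rewrite Re_ipD_sqr ipZl !ipZr [ip v v]ip_selfE -/B.
have -> : complex.Re (t%:C * (t%:C^* * (complex.Re (ip v v))%:C)) =
          t ^+ 2 * complex.Re (ip v v) by rewrite /=; ring.
have -> : complex.Re (t%:C^* * ip u v) = t * B.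
  by rewrite /B; case: (ip u v) => a b /=; ring.
rewrite /t => h.
have B2_le : B ^+ 2 <= complex.Re (ip u u) * complex.Re (ip v v).
  have e : complex.Re (ip u u) + (- B / complex.Re (ip v v)) ^+ 2 * complex.Re (ip v v)
      + 2 * (- B / complex.Re (ip v v) * B)
      = (complex.Re (ip u u) * complex.Re (ip v v) - B ^+ 2) / complex.Re (ip v v).
    by field; rewrite gt_eqF.
  by move: h; rewrite e pmulr_lge0 ?invr_gt0 // subr_ge0.
rewrite -(ger0_norm (ltW B_gt0)) -sqrtr_sqr -sqrtrM ?Re_ip_self_ge0 //.
exact: ler_wsqrtr.
Qed.

Lemma hnormD u v : hnorm ip (u + v) <= hnorm ip u + hnorm ip v.
Proof.
rewrite -(ger0_norm (addr_ge0 (hnorm_ge0 u) (hnorm_ge0 v))) -sqrtr_sqr.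
apply: ler_wsqrtr; rewrite Re_ipD_sqr sqrrD !hnorm_sqr.
by have := Re_ip_le u v; lra.
Qed.

Lemma hnorm_le_dist u v : hnorm ip u <= hnorm ip v + hnorm ip (v - u).
Proof. by rewrite -[X in hnorm ip X](subrKC v) (hdistC v u) hnormD. Qed.

End InnerProduct.

Section ComplexGrid.
Variable R : realType.

Lemma normc_ge0 (a : R[i]) : 0 <= normc a.
Proof. by case: a => *; exact: sqrtr_ge0. Qed.

Lemma normcE (a : R[i]) : `|a| = (normc a)%:C.
Proof. by case: a. Qed.

Lemma floor_scaled_approx (k x : R) : 0 < k ->
  0 <= x - (Num.floor (k * x))%:~R / k <= k^-1.
Proof.
move=> k_gt0; have /andP[lo hi] := floor_itv (k * x).
rewrite intrD in hi; set f := (Num.floor (k * x))%:~R in lo hi *.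
rewrite subr_ge0 ler_pdivrMr // mulrC lo /=.
rewrite -(ler_pM2l k_gt0) mulrBr mulrCA mulfV ?gt_eqF // mulr1.
by move: hi; rewrite [1%:~R]/=; lra.
Qed.

Lemma divc_nat (x y : R) (N : nat) : (0 < N)%N ->
  ((x +i* y)%C : R[i]) / N%:R = ((x / N%:R) +i* (y / N%:R))%C.
Proof.
move=> N_gt0; have N0 : (N%:R : R[i]) != 0 by rewrite pnatr_eq0 -lt0n.
apply: (mulIf N0); rewrite divfK // -(rmorph_nat (real_complex R)).
by simpc; rewrite !divfK ?pnatr_eq0 -?lt0n.
Qed.

Lemma normc_le_Re_Im (x : R[i]) : normc x <= `|complex.Re x| + `|complex.Im x|.
Proof.
case: x => a b /=; rewrite -(ger0_norm (addr_ge0 (normr_ge0 a) (normr_ge0 b))).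
rewrite -sqrtr_sqr; apply: ler_wsqrtr; rewrite sqrrD !real_normK ?num_real // mulr2n.
by have := mulr_ge0 (normr_ge0 a) (normr_ge0 b); lra.
Qed.

Lemma Grid_approx (N : nat) (z : R[i]) : normc z + 2 <= N%:R ->
  exists2 w : CC R, Grid N w & normc (z - w) <= 2 / N%:R.
Proof.
move=> hN; have N_gt0 : (0 : R) < N%:R by have := normc_ge0 z; lra.
have N_pos : (0 < N)%N by rewrite -(ltr0n R).
set a := Num.floor (N%:R * complex.Re z); set b := Num.floor (N%:R * complex.Im z).
have zw : normc (z - (a%:~R / N%:R) +i* (b%:~R / N%:R)) <= 2 / N%:R.
  apply: le_trans (normc_le_Re_Im _) _.
  have /andP[d1_ge0 d1_le] := floor_scaled_approx (complex.Re z) N_gt0.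
  have /andP[d2_ge0 d2_le] := floor_scaled_approx (complex.Im z) N_gt0.
  case: z {hN} @a @b d1_ge0 d1_le d2_ge0 d2_le => x y /= a b *.
  by rewrite !ger0_norm //; lra.
exists ((a%:~R / N%:R) +i* (b%:~R / N%:R)) => //.
exists a, b; split; first by rewrite divc_nat.
rewrite normcE -(rmorph_nat (real_complex R)) lecR -[X in normc X](subrKC z) -opprB.
apply: le_trans (le_normcD _ _) _; rewrite normcN.
apply: le_trans hN; rewrite lerD2l; apply: le_trans zw _.
by rewrite ler_pdivrMr // ler_peMr // ler1n.
Qed.

End ComplexGrid.

Section InjectionModulus.
Variables (R : realType) (H : lmodType R[i]) (ip : H -> H -> R[i]).
Implicit Types (D : set H) (T : H -> H).

Lemma sigma_inf_le_quot D T g : D g -> g != 0 ->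
  (sigma_inf ip D T <= (hnorm ip (T g) / hnorm ip g)%:E)%E.
Proof. by move=> Dg g0; apply: ereal_inf_lbound; exists g => //; split => //; apply/eqP. Qed.

Lemma sigma_inf_lt_quot D T (x : R) : (sigma_inf ip D T < x%:E)%E ->
  exists g, [/\ D g, g != 0 & hnorm ip (T g) / hnorm ip g < x].
Proof.
move=> /ereal_inf_lt [_ [g [Dg /eqP g0] <-]]; rewrite lte_fin => lt_x.
by exists g.
Qed.

Lemma sigma_inf_sub D D' T : D' `<=` D -> (sigma_inf ip D T <= sigma_inf ip D' T)%E.
Proof.
move=> D'D; apply: ereal_inf_le_tmp => _ [g [D'g g0] <-].
by exists g => //; split => //; apply: D'D.
Qed.

Lemma span_fam_Vn (f : nat -> H) v : span_fam f v -> \forall N \near \oo, Vn f N v.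
Proof.
move=> [n [c ->]]; near=> N; exists (fun j => if (j < n)%N then c j else 0).
rewrite (big_ord_widen N (fun j => c j *: f j)); last by near: N; exact: nbhs_infty_ge.
by rewrite big_mkcond; apply: eq_bigr => i _; case: ifP; rewrite ?scale0r.
Unshelve. all: by end_near.
Qed.

End InjectionModulus.

Section ShiftPerturbation.
Variables (R : realType) (H : lmodType R[i]) (ip : H -> H -> R[i]).
Hypothesis hip : is_inner_product ip.
Variable T : H -> H.

Lemma hnorm_shift_change (z w : R[i]) v :
  hnorm ip (T v - w *: v) <= hnorm ip (T v - z *: v) + normc (z - w) * hnorm ip v.
Proof.
have -> : T v - w *: v = (T v - z *: v) + (z - w) *: v.
  by rewrite scalerBl addrA subrK.
by rewrite -(hnormZ hip); exact: hnormD.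
Qed.

Lemma hnorm_shift_perturb (z : R[i]) (q e : R) g v : 0 <= q <= e ->
  hnorm ip (T g - z *: g) <= q * hnorm ip g ->
  (1 + normc z + e) * (hnorm ip (v - g) + hnorm ip (T v - T g)) <=
    (e - q) / 2 * hnorm ip g ->
  hnorm ip (T v - z *: v) <= (e + q) / 2 * hnorm ip v.
Proof.
move=> /andP[q_ge0 qe] shift_g close.
set a := hnorm ip (v - g) in close; set b := hnorm ip (T v - T g) in close.
have shift_v : hnorm ip (T v - z *: v) <= b + q * hnorm ip g + normc z * a.
  have -> : T v - z *: v = (T v - T g) + (T g - z *: g) + z *: (g - v).
    by rewrite scalerBr !addrA !subrK.
  apply: le_trans (hnormD hip _ _) _; apply: lerD.
    by apply: le_trans (hnormD hip _ _) _; rewrite lerD2l.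
  by rewrite (hnormZ hip) (hdistC hip g v).
have norm_g : hnorm ip g <= hnorm ip v + a.
  exact: (hnorm_le_dist hip).
have := normc_ge0 z; have := hnorm_ge0 ip (v - g); have := hnorm_ge0 ip (T v - T g).
rewrite -/a -/b => b_ge0 a_ge0 z_ge0.
have := mulr_ge0 z_ge0 b_ge0; have := mulr_ge0 (le_trans q_ge0 qe) b_ge0.
have : 0 <= a * (e - q) by rewrite mulr_ge0 // subr_ge0.
have : 0 <= (e + q) * (hnorm ip v + a - hnorm ip g).
  by rewrite mulr_ge0 ?subr_ge0 //; lra.
nra.
Qed.

End ShiftPerturbation.

Section AttouchWets.
Variable R : realType.

Lemma AW_conv_inner_approx (Cn : nat -> set (CC R)) (C : set (CC R)) :
  closed C -> (forall N, (0 < N)%N -> Cn N `<=` C) ->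
  (forall (c : CC R) (d : R), C c -> 0 < d ->
     \forall N \near \oo, exists2 w, Cn N w & `|c - w| < d%:C) ->
  AW_conv Cn C.
Proof.
move=> C_closed CnC approx; split.
  move=> C0 m; exists 1%N => n n_gt0; apply/seteqP; split => // z [Cnz _].
  by have := CnC n n_gt0 z Cnz; rewrite C0.
move=> _ d K d_gt0 K_compact.
have KC_compact : compact (K `&` C) := compact_closedI K_compact C_closed.
have cover c : (K `&` C) c -> \forall x \near c & N \near \oo,
    exists2 w, Cn N w & `|x - w| < d%:C.
  move=> [_ Cc]; have d2_gt0 : 0 < d / 2 by rewrite divr_gt0.
  exists (ball c (d / 2)%:C, [set N | exists2 w, Cn N w & `|c - w| < (d / 2)%:C]).
    by split; [apply: nbhsx_ballx; rewrite ltcR | exact: approx].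
  move=> [x N] /= [cx [w Cnw cw]]; exists w => //.
  have -> : x - w = (x - c) + (c - w) by rewrite addrA subrK.
  have -> : d%:C = (d / 2)%:C + (d / 2)%:C :> R[i] by rewrite -rmorphD -splitr.
  by apply: le_lt_trans (ler_normD _ _) _; rewrite ltrD // distrC.
have [n0 _ near_all] := (compact_near_coveringP _).1 KC_compact nat \oo _ _ cover.
exists (maxn n0 1) => n; rewrite geq_max => /andP[n0n n_gt0]; split.
  by move=> w [Cnw _]; exists w; [exact: CnC n_gt0 w Cnw | rewrite subrr normr0 ltcR].
by move=> w [Cw Kw]; exact: near_all n0n w (conj Kw Cw).
Qed.

End AttouchWets.

Section KoopmanApprox.
Variables (R : realType) (X : Type) (H : lmodType R[i]) (ip : H -> H -> R[i])
  (ev : H -> X -> R[i]) (kf : X -> H) (F : X -> X) (xs : nat -> X) (eps : R).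
Hypothesis hH : is_RKHS ip ev kf.
Hypothesis hcoreK : is_core ip (span_fam (kf \o xs)) (koop_dom ev F) (koop ev F).

Local Notation K := (koop ev F).
Local Notation D := (koop_dom ev F).
Local Notation Gamma := (Gamma_hat ip ev kf F xs eps).

Let hip := rkhs_ip hH.

Lemma Gamma_hat_sub N : (0 < N)%N ->
  Gamma N `<=` [set z | (sigma_inf ip D (koop_shift ev F z) < eps%:E)%E].
Proof.
move=> N_gt0 z [_ /= le_eps]; have inv_gt0 : (0 : R) < N%:R^-1 by rewrite invr_gt0 ltr0n.
apply: le_lt_trans (sigma_inf_sub ip _ (@subIsetr _ (Vn (kf \o xs) N) D)) _.
by move: le_eps; case: sigma_inf => [x| |] //=; rewrite -EFinD !lee_fin lte_fin; lra.
Qed.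

Lemma koop_shift_core_approx (z : R[i]) g : D g -> g != 0 ->
  hnorm ip (koop_shift ev F z g) / hnorm ip g < eps ->
  exists v, [/\ span_fam (kf \o xs) v, D v, v != 0 &
    hnorm ip (K v - z *: v) <= (eps + hnorm ip (K g - z *: g) / hnorm ip g) / 2 * hnorm ip v].
Proof.
rewrite /koop_shift; set q := _ / hnorm ip g => Dg g0 q_lt.
have g_gt0 : 0 < hnorm ip g by rewrite (hnorm_gt0 hip).
have q_ge0 : 0 <= q by rewrite divr_ge0 ?hnorm_ge0.
have Z_gt0 : 0 < 1 + normc z + eps by have := normc_ge0 z; lra.
pose tau := (eps - q) / 2 * hnorm ip g / (1 + normc z + eps).
have tau_gt0 : 0 < tau by rewrite !divr_gt0 ?mulr_gt0 ?subr_gt0.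
have [v [Sv close]] := hcoreK.2 g Dg tau tau_gt0.
have := hnorm_ge0 ip (v - g); have := hnorm_ge0 ip (K v - K g) => b_ge0 a_ge0.
have {}close : (1 + normc z + eps) * (hnorm ip (v - g) + hnorm ip (K v - K g)) <=
    (eps - q) / 2 * hnorm ip g.
  by rewrite mulrC -ler_pdivlMr //; apply: ltW.
exists v; split => //; first exact: hcoreK.1.
  have : 0 < (1 + normc z + eps - (eps - q) / 2) * hnorm ip g.
    by rewrite mulr_gt0 //; have := normc_ge0 z; lra.
  have := hnorm_le_dist hip g v; rewrite -(hnorm_gt0 hip); nra.
apply: (hnorm_shift_perturb hip) close; first by rewrite q_ge0 ltW.
by rewrite /q divfK ?gt_eqF.
Qed.

Lemma Gamma_hat_approx (c : CC R) (d : R) : 0 < d -> Sp_ap ip ev F eps c ->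
  \forall N \near \oo, exists2 w, Gamma N w & `|c - w| < d%:C.
Proof.
move=> d_gt0 Sc; have d2_gt0 : 0 < d / 2 by rewrite divr_gt0.
have ball_c : nbhs c (ball c (d / 2)%:C) by apply: nbhsx_ballx; rewrite ltcR.
have [z [/sigma_inf_lt_quot[g [Dg g0 q_lt]] cz]] := Sc _ ball_c.
have [v [Sv Dv v0 shift_v]] := koop_shift_core_approx Dg g0 q_lt.
move: q_lt shift_v; rewrite /koop_shift; set q := _ / hnorm ip g => q_lt shift_v.
have v_gt0 : 0 < hnorm ip v by rewrite (hnorm_gt0 hip).
near=> N.
have N_large : normc z + 2 <= N%:R by near: N; exact: nbhs_infty_ger.
have N_gt0 : (0 : R) < N%:R by have := normc_ge0 z; lra.
have N_eps : 6 * N%:R^-1 <= eps - q.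
  rewrite ler_pdivrMr // mulrC -ler_pdivrMr ?subr_gt0 //.
  by near: N; exact: nbhs_infty_ger.
have N_d : 4 * N%:R^-1 <= d.
  rewrite ler_pdivrMr // mulrC -ler_pdivrMr //.
  by near: N; exact: nbhs_infty_ger.
have [w Gw zw] := Grid_approx N_large.
exists w; first split => //.
  have Vv : (Vn (kf \o xs) N `&` D) v by split => //; near: N; exact: span_fam_Vn.
  apply: le_trans (leeD2r _ (sigma_inf_le_quot ip (koop_shift ev F w) Vv v0)) _.
  rewrite -EFinD lee_fin -lerBrDr ler_pdivrMr //.
  apply: le_trans (hnorm_shift_change hip _ z w v) _.
  apply: le_trans (lerD shift_v (ler_wpM2r (hnorm_ge0 ip v) zw)) _.
  by rewrite -mulrDl ler_wpM2r ?hnorm_ge0 //; lra.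
have -> : c - w = (c - z) + (z - w) by rewrite addrA subrK.
have -> : d%:C = (d / 2)%:C + (d / 2)%:C :> R[i] by rewrite -rmorphD -splitr.
apply: le_lt_trans (ler_normD _ _) _; rewrite ltr_leD // normcE lecR.
by apply: le_trans zw _; lra.
Unshelve. all: by end_near.
Qed.

End KoopmanApprox.

Theorem mainTheorem7 (R : realType) (X : Type) (H : lmodType R[i])
  (ip : H -> H -> R[i]) (ev : H -> X -> R[i]) (kf : X -> H)
  (hH : is_RKHS ip ev kf) (F : X -> X) (xs : nat -> X)
  (hdense : dense_in_H ip (koop_dom ev F))
  (hcoreK : is_core ip (span_fam (kf \o xs)) (koop_dom ev F) (koop ev F))
  (hcoreKs : is_core ip (span_fam (kf \o xs))
                (koop_adj_dom ip ev F) (koop_adj ip ev F))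
  (eps : R) (heps : 0 < eps) :
  (forall N : nat, (0 < N)%N ->
     Gamma_hat ip ev kf F xs eps N `<=` Sp_ap ip ev F eps) /\
  AW_conv (Gamma_hat ip ev kf F xs eps) (Sp_ap ip ev F eps).
Proof.
have Gamma_sub N : (0 < N)%N -> Gamma_hat ip ev kf F xs eps N `<=` Sp_ap ip ev F eps.
  by move=> N_gt0 z /(Gamma_hat_sub N_gt0); exact: subset_closure.
split => //; apply: AW_conv_inner_approx Gamma_sub _; first exact: closed_closure.
by move=> c d Sc d_gt0; exact: Gamma_hat_approx.
Qed.
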